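(* Let $N\ge 3$ and let $M_N$ be $K_N$ with the edge $\{u,v\}$ removed. Consider the Moran process with mutants on $M_N$ and residents on $K_N$. For a configuration with $a$ mutants among the $N-2$ vertices other than $u,v$ and $b$ mutants among $\{u,v\}$ ($0\le a\le N-2$, $0\le b\le 2$), the probability of reaching the all-mutant state equals \[ \varphi(a,b)=\frac{(a+b)(N-2)+\tfrac12 b(b-1)}{(N-1)^2}. \] Conversely, with mutants on $K_N$ and residents on $M_N$, the probability of reaching the all-mutant state from such a configuration equals \[ \frac{(a+b)(N-2)+\tfrac12 b(3-b)}{(N-1)^2}. \]
   Context: Moran Birth-death process on two graphs (neutral case): $G^A$ (mutant graph) and $G^B$ (resident graph) are connected undirected simple graphs on the same vertex set $\{1,\dots,N\}$. Every vertex is occupied by one individual, of type $A$ (mutant) or type $B$ (resident). In each step, one individual is chosen uniformly at random to reproduce; its offspring (same type) replaces the individual at a uniformly random neighbor of the parent's vertex, neighbors taken in $G^A$ if the parent is type $A$ and in $G^B$ if type $B$. The all-$A$ and all-$B$ states are absorbing. $K_N$ denotes the complete graph. *)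

From HB Require Import structures.
From mathcomp Require Import all_boot all_order all_algebra.
From mathcomp Require Import all_classical all_reals topology normedtype sequences.
Set Implicit Arguments. Unset Strict Implicit. Unset Printing Implicit Defensive.
Import Order.TTheory GRing.Theory Num.Theory.
Local Open Scope ring_scope.

(* A configuration: x k = true iff vertex k holds a mutant (type A). *)
Definition config (N : nat) := {ffun 'I_N -> bool}.

Definition KN (N : nat) : rel 'I_N := fun i j => i != j.
Definition MN (N : nat) (u v : 'I_N) : rel 'I_N :=
  fun i j => (i != j) && ~~ (((i == u) && (j == v)) || ((i == v) && (j == u))).

Definition deg (N : nat) (e : rel 'I_N) (i : 'I_N) : nat := #|[pred j | e i j]|.

(* Offspring of the parent at i (type b) replaces the individual at j. *)
Definition upd (N : nat) (x : config N) (j : 'I_N) (b : bool) : config N :=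
  [ffun k => if k == j then b else x k].

Definition allA (N : nat) (x : config N) : bool := [forall k, x k].

(* Probability of one Birth-death step i -> j from configuration x, where
   eA is the mutant graph and eB the resident graph. *)
Definition stepw (R : realType) (N : nat) (eA eB : rel 'I_N) (x : config N)
  (i j : 'I_N) : R :=
  let e := if x i then eA else eB in
  if e i j then (N%:R * (deg e i)%:R)^-1 else 0.

(* hitA t x = probability that, starting from x, the process has reached the
   all-mutant state within t steps. *)
Fixpoint hitA (R : realType) (N : nat) (eA eB : rel 'I_N) (t : nat)
  (x : config N) : R :=
  if allA x then 1 else
  match t with
  | 0 => 0
  | t'.+1 => \sum_(i : 'I_N) \sum_(j : 'I_N)
               stepw R eA eB x i j * hitA R eA eB t' (upd x j (x i))
  end.

Definition cnt_out (N : nat) (u v : 'I_N) (x : config N) : nat :=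
  #|[pred k | x k && (k != u) && (k != v)]|.
Definition cnt_in (N : nat) (u v : 'I_N) (x : config N) : nat :=
  #|[pred k | x k && ((k == u) || (k == v))]|.

From HB Require Import structures.
From mathcomp Require Import all_boot all_order all_algebra.
From mathcomp Require Import all_classical all_reals topology normedtype sequences.
From mathcomp Require Import ring.
Import Order.TTheory GRing.Theory Num.Theory.
Import numFieldNormedType.Exports.
Local Open Scope classical_set_scope.
Local Open Scope ring_scope.

(* The truncated hitting probabilities hitA t x increase to the fixation
   probability, which is harmonic for the one-step kernel and equals 1 at the
   all-A state and 0 at the all-B state.  From every other state some step
   replaces a resident by a mutant with positive probability, so a maximum
   principle shows that these boundary conditions determine a harmonic function
   uniquely.  It remains to check that the claimed formula is harmonic.  A step
   only changes a = #mutants off {u,v} or b = #mutants on {u,v} by one, with a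
   probability depending only on the types of parent and target and on whether
   they lie in {u,v}; grouping the N^2 pairs (parent, target) into these 16
   classes turns harmonicity into a rational identity in N and a, checked for
   b = 0, 1, 2. *)

Lemma convex_comb_eq_max (R : numDomainType) (I : finType) (w f : I -> R) (m : R) :
  (forall i, 0 <= w i) -> \sum_i w i = 1 -> (forall i, f i <= m) ->
  \sum_i w i * f i = m -> forall i, 0 < w i -> f i = m.
Proof.
move=> w_ge0 w_sum1 f_le_m avg_m i wi_gt0.
have gap0 : \sum_k w k * (m - f k) = 0.
  under eq_bigr do rewrite mulrBr.
  by rewrite sumrB -mulr_suml w_sum1 mul1r avg_m subrr.
move/eqP: gap0; rewrite psumr_eq0 => [/allP/(_ i (mem_index_enum _))|k _]; last first.
  by rewrite mulr_ge0 // subr_ge0.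
by rewrite mulf_eq0 gt_eqF //= subr_eq0 => /eqP.
Qed.

Lemma upd_id (N : nat) (x : config N) (j : 'I_N) : upd x j (x j) = x.
Proof. by apply/ffunP => k; rewrite ffunE; case: eqP => // ->. Qed.

Section Absorption.
Variables (R : realType) (N : nat) (eA eB : rel 'I_N).
Local Notation P := (stepw R eA eB).
Local Notation h := (hitA R eA eB).

Lemma stepw_ge0 (x : config N) i j : 0 <= P x i j.
Proof. by rewrite /stepw; case: ifP => // _; rewrite invr_ge0 mulr_ge0. Qed.

Definition harmonic (f : config N -> R) :=
  forall x, ~~ allA x -> (exists k, x k) ->
  \sum_i \sum_j P x i j * f (upd x j (x i)) = f x.

Lemma harmonicB {f g : config N -> R} :
  harmonic f -> harmonic g -> harmonic (fun x => f x - g x).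
Proof.
move=> hf hg x nA mx; rewrite -(hf x nA mx) -(hg x nA mx) -sumrB.
by apply: eq_bigr => i _; rewrite -sumrB; apply: eq_bigr => j _; rewrite mulrBr.
Qed.

Hypothesis stepw_sum1 : forall x, \sum_i \sum_j P x i j = 1.
Hypothesis resident_replaceable : forall x, ~~ allA x -> (exists k, x k) ->
  exists i j, [&& x i, ~~ x j & 0 < P x i j].

Lemma hitA_ge0_le1 t (x : config N) : 0 <= h t x <= 1.
Proof.
elim: t x => [|t IH] x /=; first by case: ifP; rewrite ?ler01 ?lexx.
case: ifP => _; first by rewrite ler01 lexx.
apply/andP; split.
  apply: sumr_ge0 => i _; apply: sumr_ge0 => j _.
  by rewrite mulr_ge0 ?stepw_ge0 //; case/andP: (IH (upd x j (x i))).
rewrite -(stepw_sum1 x); apply: ler_sum => i _; apply: ler_sum => j _.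
by rewrite ler_piMr ?stepw_ge0 //; case/andP: (IH (upd x j (x i))).
Qed.

Lemma hitA_nondecreasing t (x : config N) : h t x <= h t.+1 x.
Proof.
elim: t x => [|t IH] x /=; case: ifP => // _.
  apply: sumr_ge0 => i _; apply: sumr_ge0 => j _.
  by rewrite mulr_ge0 ?stepw_ge0 //; case: ifP.
by apply: ler_sum => i _; apply: ler_sum => j _; rewrite ler_wpM2l ?stepw_ge0.
Qed.

Lemma hitA_noA t (x : config N) : ~~ allA x -> (forall k, ~~ x k) -> h t x = 0.
Proof.
move=> nA noA; elim: t => [|t IH] /=; rewrite (negbTE nA) //.
apply: big1 => i _; apply: big1 => j _.
by rewrite (negbTE (noA i)) -(negbTE (noA j)) upd_id IH mulr0.
Qed.

Definition fixation (x : config N) : R := limn (fun t => h t x).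

Lemma hitA_cvg (x : config N) : (fun t => h t x) @ \oo --> fixation x.
Proof.
apply: nondecreasing_is_cvgn.
  by apply/nondecreasing_seqP => t; exact: hitA_nondecreasing.
by exists 1 => _ [t _ <-]; case/andP: (hitA_ge0_le1 t x).
Qed.

Lemma fixation_cst (x : config N) c : (forall t, h t x = c) -> fixation x = c.
Proof.
move=> hc; have cst : (fun t => h t x) @ \oo --> c.
  have -> : (fun t => h t x) = (fun=> c) by apply: funext.
  exact: cvg_cst.
exact: cvg_unique (hitA_cvg x) cst.
Qed.

Lemma fixation_allA (x : config N) : allA x -> fixation x = 1.
Proof. by move=> Ax; apply: fixation_cst => -[|t] /=; rewrite Ax. Qed.

Lemma fixation_noA (x : config N) : ~~ allA x -> (forall k, ~~ x k) -> fixation x = 0.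
Proof. by move=> nA noA; apply: fixation_cst => t; exact: hitA_noA. Qed.

Lemma fixation_harmonic : harmonic fixation.
Proof.
move=> x nA _.
have shifted : (fun t => h t.+1 x) @ \oo --> fixation x
  by have := hitA_cvg x; rewrite -cvg_shiftS.
have averaged : (fun t => h t.+1 x) @ \oo -->
    \sum_i \sum_j P x i j * fixation (upd x j (x i)).
  have -> : (fun t => h t.+1 x) =
            fun t => \sum_i \sum_j P x i j * h t (upd x j (x i)).
    by apply: funext => t /=; rewrite (negbTE nA).
  apply: cvg_big => //; first exact: add_continuous.
  move=> i _; apply: cvg_big => //; first exact: add_continuous.
  by move=> j _; apply: cvgMl_tmp; exact: hitA_cvg.
exact: cvg_unique averaged shifted.
Qed.

Lemma harmonic_max_step {D : config N -> R} {y : config N} :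
  harmonic D -> (forall z, D z <= D y) -> ~~ allA y -> (exists k, y k) ->
  exists i j, [&& y i, ~~ y j & D (upd y j (y i)) == D y].
Proof.
move=> hD y_max nA my; have [i [j /and3P[yi nyj Pij]]] := resident_replaceable y nA my.
exists i, j; apply/and3P; split => //; apply/eqP.
apply: (@convex_comb_eq_max R ('I_N * 'I_N)%type (fun p => P y p.1 p.2)
          (fun p => D (upd y p.2 (y p.1))) (D y) _ _ _ _ (i, j)) => //.
- by move=> p; exact: stepw_ge0.
- by rewrite -pair_bigA; exact: stepw_sum1.
- by rewrite -(pair_bigA _ (fun i j => P y i j * D (upd y j (y i)))); exact: hD.
Qed.

Lemma harmonic_max_le0 {D : config N -> R} :
  harmonic D -> (forall x, allA x -> D x = 0) ->
  (forall x, ~~ allA x -> (forall k, ~~ x k) -> D x = 0) ->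
  forall x, D x <= 0.
Proof.
move=> hD D_allA D_noA x.
have [y _ y_max] := @arg_maxP _ R _ x xpredT D isT.
(* From a maximiser of D, resident-replacing steps keep D maximal until all-A. *)
suff: forall n (z : config N), #|[pred k | ~~ z k]| = n -> D z = D y -> D y <= 0.
  by move=> /(_ _ y erefl erefl); apply: le_trans (y_max x isT).
have z_max z : D z = D y -> forall z', D z' <= D z by move=> -> z'; exact: y_max.
elim=> [|n IH] z zn Dz.
  suff Az : allA z by rewrite -Dz D_allA.
  by apply/forallP => k; apply: contraT => nzk; move: zn; rewrite (cardD1 k) inE nzk.
have nAz : ~~ allA z.
  have /card_gt0P[k] : (0 < #|[pred k | ~~ z k]|)%N by rewrite zn.
  by rewrite inE => nzk; apply/forallPn; exists k.
have [[k zk]|noA] := pselect (exists k, z k); last first.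
  by rewrite -Dz D_noA // => k; apply/negP => zk; apply: noA; exists k.
have [i [j /and3P[zi nzj /eqP D_next]]] :=
  harmonic_max_step hD (z_max z Dz) nAz (ex_intro _ k zk).
apply: (IH (upd z j (z i))); last by rewrite D_next.
move: zn; rewrite (cardD1 j) inE nzj add1n => -[<-].
by apply: eq_card => l; rewrite !inE ffunE; case: eqP => [->|]; rewrite ?zi.
Qed.

Lemma hitA_cvg_harmonic (phi : config N -> R) :
  harmonic phi -> (forall x, allA x -> phi x = 1) ->
  (forall x, ~~ allA x -> (forall k, ~~ x k) -> phi x = 0) ->
  forall x, (fun t => h t x) @ \oo --> phi x.
Proof.
move=> hphi phi_allA phi_noA x.
have le0 f g : harmonic f -> harmonic g ->
    (forall x, allA x -> f x = g x) ->
    (forall x, ~~ allA x -> (forall k, ~~ x k) -> f x = g x) -> f x - g x <= 0.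
  move=> hf hg fgA fgB.
  apply: (harmonic_max_le0 (harmonicB hf hg)) => [y Ay|y nA noA] /=.
    by rewrite fgA // subrr.
  by rewrite fgB // subrr.
suff phi_fix : phi x = fixation x by rewrite phi_fix; exact: hitA_cvg.
apply/eqP; rewrite eq_le -subr_le0 -[fixation x <= _]subr_le0.
rewrite !le0 //; try exact: fixation_harmonic.
- by move=> y Ay; rewrite phi_allA ?fixation_allA.
- by move=> y nA noA; rewrite phi_noA ?fixation_noA.
- by move=> y Ay; rewrite phi_allA ?fixation_allA.
- by move=> y nA noA; rewrite phi_noA ?fixation_noA.
Qed.

End Absorption.

Lemma sum_by_classes {R : pzRingType} {T : finType} (f g : T -> bool)
    (F : bool -> bool -> R) :
  \sum_i F (f i) (g i) =
  \sum_(p : bool) \sum_(s : bool) #|[pred i | (f i == p) && (g i == s)]|%:R * F p s.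
Proof.
transitivity (\sum_i \sum_(p : bool) \sum_(s : bool)
                if (f i == p) && (g i == s) then F p s else 0).
  apply: eq_bigr => i _; rewrite !big_bool /=.
  by case: (f i); case: (g i); rewrite /= ?addr0 ?add0r.
rewrite exchange_big; apply: eq_bigr => p _; rewrite exchange_big; apply: eq_bigr => s _.
by rewrite -big_mkcond /= sumr_const mulr_natl.
Qed.

Section KNminusEdge.
Variables (R : realType) (N : nat) (u v : 'I_N).
Hypotheses (N_ge3 : (3 <= N)%N) (neq_uv : u != v).
Local Notation n := (N%:R : R).

Definition outer (k : 'I_N) := (k != u) && (k != v).

Definition graph (m : bool) : rel 'I_N := if m then MN u v else @KN N.

Lemma card_inner : #|[pred k | ~~ outer k]| = 2%N.
Proof.
have := cards2 u v; rewrite neq_uv => <-; apply: eq_card => k.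
by rewrite !inE /outer negb_and !negbK.
Qed.

Lemma card_outer : #|[pred k | outer k]| = (N - 2)%N.
Proof.
have := cardC [pred k | outer k]; rewrite card_ord.
have -> : #|[predC [pred k | outer k]]| = 2%N by rewrite -card_inner; apply: eq_card.
by move=> E; rewrite -[in RHS]E addnK.
Qed.

Lemma MN_inner i j : ~~ outer i -> MN u v i j = outer j.
Proof.
have neq_vu : v != u by rewrite eq_sym.
rewrite /outer /MN negb_and !negbK => /orP[] /eqP ->.
  by rewrite eqxx (negbTE neq_uv) (eq_sym u j) /=; case: (j == u); case: (j == v).
by rewrite eqxx (negbTE neq_vu) (eq_sym v j) /=; case: (j == u); case: (j == v).
Qed.

Lemma MN_outer i j : outer i -> MN u v i j = (i != j).
Proof. by rewrite /outer /MN => /andP[/negbTE -> /negbTE ->]; rewrite /= andbT. Qed.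

Lemma MN_neq i j : i != j -> MN u v i j = outer i || outer j.
Proof.
move=> ij; case oi: (outer i); first by rewrite MN_outer.
by rewrite MN_inner ?oi.
Qed.

Lemma n_sub_gt0 : [/\ 0 < n, 0 < n - 1 & 0 < n - 2].
Proof.
have n_gt2 : 2 < n by rewrite ltr_nat.
have n_gt1 : 1 < n by apply: lt_trans n_gt2; rewrite ltr1n.
by rewrite !subr_gt0 n_gt2 n_gt1 (lt_trans ltr01 n_gt1).
Qed.

Lemma deg_graph m i :
  (deg (graph m) i)%:R = (if m && ~~ outer i then n - 2 else n - 1) :> R.
Proof.
have N_gt0 : (0 < N)%N by apply: leq_trans N_ge3.
rewrite /deg; case: m => /=; last first.
  rewrite (eq_card (B := predC1 i)) ?cardC1 ?card_ord -?subn1 ?natrB //.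
  by move=> j; rewrite !inE /KN eq_sym.
case oi: (outer i) => /=.
  rewrite (eq_card (B := predC1 i)) ?cardC1 ?card_ord -?subn1 ?natrB //.
  by move=> j; rewrite !inE MN_outer // eq_sym.
rewrite (eq_card (B := [pred k | outer k])) ?card_outer ?natrB //.
  exact: leq_trans N_ge3.
by move=> j; rewrite !inE MN_inner ?oi.
Qed.

(* Probability that a parent of type [p] replaces a neighbour of the other type;
   [s] and [t] tell whether parent and target lie outside {u,v}. *)
Definition rate (mA mB p s t : bool) : R :=
  if (if p then mA else mB) then
    (if s || t then (n * (if s then n - 1 else n - 2))^-1 else 0)
  else (n * (n - 1))^-1.

Lemma graph_if (mA mB p : bool) :
  (if p then graph mA else graph mB) = graph (if p then mA else mB).
Proof. by case: p. Qed.

Lemma stepw_rate mA mB (x : config N) i j : x i != x j ->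
  stepw R (graph mA) (graph mB) x i j = rate mA mB (x i) (outer i) (outer j).
Proof.
move=> xij; have ij : i != j by apply: contraNneq xij => ->.
rewrite /stepw /rate graph_if deg_graph.
case: (if x i then mA else mB) => /=; last by rewrite /KN ij.
by rewrite MN_neq //; case: (outer i); case: (outer j).
Qed.

Lemma stepw_sum1 mA mB (x : config N) :
  \sum_i \sum_j stepw R (graph mA) (graph mB) x i j = 1.
Proof.
have [n_gt0 n1_gt0 n2_gt0] := n_sub_gt0.
have row i : \sum_j stepw R (graph mA) (graph mB) x i j = n^-1.
  rewrite /stepw graph_if; set m := (if x i then mA else mB).
  rewrite -big_mkcond /= sumr_const -[LHS]mulr_natr -/(deg (graph m) i).
  rewrite invfM -mulrA mulVf ?mulr1 // deg_graph.
  by case: ifP => _; rewrite gt_eqF.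
rewrite (eq_bigr _ (fun i _ => row i)) sumr_const card_ord -[LHS]mulr_natr.
by rewrite mulVf ?gt_eqF.
Qed.

Lemma rate_gt0 mA mB p s t :
  (if p then mA else mB) ==> (s || t) -> 0 < rate mA mB p s t.
Proof.
have [n_gt0 n1_gt0 n2_gt0] := n_sub_gt0.
rewrite /rate; case: (if p then mA else mB) => /= st; last by rewrite invr_gt0 mulr_gt0.
by rewrite st invr_gt0 mulr_gt0 //; case: s {st}.
Qed.

Lemma resident_replaceable_graph mA mB (x : config N) :
  ~~ allA x -> (exists k, x k) ->
  exists i j, [&& x i, ~~ x j & 0 < stepw R (graph mA) (graph mB) x i j].
Proof.
move=> /forallPn [j nxj] [i xi].
have replace i' j' : x i' -> ~~ x j' -> outer i' || outer j' ->
    exists i j, [&& x i, ~~ x j & 0 < stepw R (graph mA) (graph mB) x i j].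
  move=> xi' nxj' oo; exists i', j'; rewrite xi' nxj' /= stepw_rate; last first.
    by rewrite xi' (negbTE nxj').
  by apply: rate_gt0; rewrite xi' oo implybT.
case oij: (outer i || outer j); first exact: replace oij.
have /card_gt0P[w ow] : (0 < #|[pred k | outer k]|)%N by rewrite card_outer subn_gt0.
rewrite inE in ow; case xw: (x w).
  by apply: (replace w j) => //; rewrite ow.
by apply: (replace i w) => //; rewrite ?xw // ow orbT.
Qed.

Definition mutants (x : config N) (q : pred 'I_N) := #|[pred k | x k && q k]|.

Lemma cnt_out_mutants (x : config N) : cnt_out u v x = mutants x outer.
Proof. by apply: eq_card => k; rewrite !inE /outer andbA. Qed.

Lemma cnt_in_mutants (x : config N) : cnt_in u v x = mutants x (predC outer).
Proof. by apply: eq_card => k; rewrite !inE /outer negb_and !negbK. Qed.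

Lemma mutants_upd (x : config N) j c q : (mutants (upd x j c) q)%:R =
  (mutants x q)%:R + (c && q j : nat)%:R - (x j && q j : nat)%:R :> R.
Proof.
rewrite /mutants (cardD1 j [pred k | upd x j c k && q k]).
rewrite (cardD1 j [pred k | x k && q k]) !inE ffunE eqxx.
have -> : #|[predD1 [pred k | upd x j c k && q k] & j]| =
          #|[predD1 [pred k | x k && q k] & j]|.
  by apply: eq_card => k; rewrite !inE ffunE; case: eqP.
by rewrite !natrD; ring.
Qed.

Lemma mutants_residents (x : config N) q :
  (mutants x q + #|[pred k | ~~ x k && q k]|)%N = #|[pred k | q k]|.
Proof.
rewrite -(cardID x [pred k | q k]).
by congr (_ + _)%N; apply: eq_card => k; rewrite !inE andbC.
Qed.

Definition at_counts (F : R -> R -> R) (x : config N) :=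
  F (cnt_out u v x)%:R (cnt_in u v x)%:R.

(* Contribution to the expected change of [F] at counts (a, b) of a step in
   which a parent of type [p] replaces an individual of type [q]. *)
Definition drift (F : R -> R -> R) (a b : R) mA mB (p s q t : bool) : R :=
  if p == q then 0 else rate mA mB p s t *
    (F (if p then a + (t : nat)%:R else a - (t : nat)%:R)
       (if p then b + (~~ t : nat)%:R else b - (~~ t : nat)%:R) - F a b).

Lemma stepw_at_counts_change F mA mB (x : config N) i j :
  stepw R (graph mA) (graph mB) x i j
    * (at_counts F (upd x j (x i)) - at_counts F x) =
  drift F (cnt_out u v x)%:R (cnt_in u v x)%:R mA mB (x i) (outer i) (x j) (outer j).
Proof.
rewrite /drift; case: eqP => [->|/eqP xij]; first by rewrite upd_id subrr mulr0.
rewrite stepw_rate //; congr (_ * (_ - _)).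
rewrite /at_counts !cnt_out_mutants !cnt_in_mutants !mutants_upd /=.
by move: xij; case: (x i); case: (x j) => //= _; rewrite ?subr0 ?addr0.
Qed.

Definition class_card (x : config N) (p s : bool) : R :=
  #|[pred k | (x k == p) && (outer k == s)]|%:R.

Lemma expected_change F mA mB (x : config N) :
  \sum_i \sum_j stepw R (graph mA) (graph mB) x i j * at_counts F (upd x j (x i))
    - at_counts F x =
  \sum_(q : bool) \sum_(t : bool) \sum_(p : bool) \sum_(s : bool)
     class_card x p s * (class_card x q t *
       drift F (cnt_out u v x)%:R (cnt_in u v x)%:R mA mB p s q t).
Proof.
set a := (cnt_out u v x)%:R; set b := (cnt_in u v x)%:R.
rewrite -[X in _ - X]mul1r -(stepw_sum1 mA mB x) !mulr_suml -sumrB.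
transitivity (\sum_i \sum_j drift F a b mA mB (x i) (outer i) (x j) (outer j)).
  apply: eq_bigr => i _; rewrite mulr_suml -sumrB; apply: eq_bigr => j _.
  by rewrite -mulrBr stepw_at_counts_change.
under eq_bigr do rewrite (sum_by_classes x outer (drift F a b mA mB _ _)).
rewrite exchange_big; apply: eq_bigr => q _; rewrite exchange_big; apply: eq_bigr => t _.
by rewrite (sum_by_classes x outer
  (fun p s => class_card x q t * drift F a b mA mB p s q t)).
Qed.

Lemma class_card_tt (x : config N) : class_card x true true = (cnt_out u v x)%:R.
Proof.
rewrite /class_card cnt_out_mutants; congr _%:R.
by apply: eq_card => k; rewrite !inE !eqb_id.
Qed.

Lemma class_card_tf (x : config N) : class_card x true false = (cnt_in u v x)%:R.
Proof.
rewrite /class_card cnt_in_mutants; congr _%:R.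
by apply: eq_card => k; rewrite !inE eqb_id eqbF_neg.
Qed.

Lemma class_card_ft (x : config N) :
  class_card x false true = n - 2 - (cnt_out u v x)%:R.
Proof.
have := congr1 (fun m => m%:R : R) (mutants_residents x outer).
rewrite card_outer natrD natrB; last exact: leq_trans N_ge3.
move=> <-; rewrite cnt_out_mutants addrAC subrr add0r /class_card; congr _%:R.
by apply: eq_card => k; rewrite !inE eqb_id eqbF_neg.
Qed.

Lemma class_card_ff (x : config N) :
  class_card x false false = 2 - (cnt_in u v x)%:R.
Proof.
have := congr1 (fun m => m%:R : R) (mutants_residents x (predC outer)).
have -> : #|[pred k | predC outer k]| = 2%N by rewrite -card_inner; apply: eq_card.
rewrite natrD => <-; rewrite cnt_in_mutants addrAC subrr add0r /class_card; congr _%:R.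
by apply: eq_card => k; rewrite !inE !eqbF_neg.
Qed.

Lemma cnt_in_le2 (x : config N) : (cnt_in u v x <= 2)%N.
Proof.
have <- : #|[pred k | predC outer k]| = 2%N by rewrite -card_inner; apply: eq_card.
by rewrite cnt_in_mutants -(mutants_residents x (predC outer)) leq_addr.
Qed.

(* [m] tells whether the mutants live on M_N (and the residents on K_N). *)
Definition fixprob (m : bool) (a b : R) :=
  ((a + b) * (n - 2) + 2^-1 * b * (if m then b - 1 else 3 - b)) / (n - 1) ^+ 2.

Lemma fixprob_harmonic m (x : config N) :
  \sum_i \sum_j stepw R (graph m) (graph (~~ m)) x i j
                 * at_counts (fixprob m) (upd x j (x i))
  = at_counts (fixprob m) x.
Proof.
apply/eqP; rewrite -subr_eq0 expected_change !big_bool /= /drift /rate /=.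
rewrite !class_card_tt !class_card_tf !class_card_ft !class_card_ff /fixprob.
have [/lt0r_neq0 n0 /lt0r_neq0 n1 /lt0r_neq0 n2] := n_sub_gt0.
have := cnt_in_le2 x; move: (cnt_in u v x) (cnt_out u v x) => b a.
by case: m; case: b => [|[|[|b]]] //= _; apply/eqP; field; rewrite n0 n1 n2.
Qed.

Lemma cnt_allA (x : config N) : allA x ->
  cnt_out u v x = (N - 2)%N /\ cnt_in u v x = 2%N.
Proof.
move=> /forallP Ax.
have no_res q : #|[pred k | ~~ x k && q k]| = 0%N.
  by apply: eq_card0 => k; rewrite !inE Ax.
rewrite cnt_out_mutants cnt_in_mutants -card_outer -card_inner.
rewrite -(mutants_residents x outer) -(mutants_residents x (predC outer)) !no_res !addn0.
by split; last by apply: eq_card.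
Qed.

Lemma fixprob_allA m (x : config N) : allA x -> at_counts (fixprob m) x = 1.
Proof.
move=> /cnt_allA[out_all in_all].
rewrite /at_counts out_all in_all /fixprob natrB; last exact: leq_trans N_ge3.
have [_ /lt0r_neq0 n1 _] := n_sub_gt0.
by case: m; apply/eqP; rewrite -subr_eq0; apply/eqP; field.
Qed.

Lemma fixprob_noA m (x : config N) :
  (forall k, ~~ x k) -> at_counts (fixprob m) x = 0.
Proof.
move=> noA; have no_mut q : mutants x q = 0%N.
  by apply: eq_card0 => k; rewrite !inE (negbTE (noA k)).
rewrite /at_counts /fixprob cnt_out_mutants cnt_in_mutants !no_mut.
by rewrite !(addr0, mul0r, mulr0).
Qed.

Lemma hitA_cvg_fixprob m (x : config N) :
  (fun t => hitA R (graph m) (graph (~~ m)) t x) @ \oo --> at_counts (fixprob m) x.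
Proof.
apply: hitA_cvg_harmonic.
- exact: stepw_sum1.
- exact: resident_replaceable_graph.
- by move=> y _ _; exact: fixprob_harmonic.
- exact: fixprob_allA.
- by move=> y _; exact: fixprob_noA.
Qed.

End KNminusEdge.

Theorem mainTheorem2 (R : realType) (N : nat) (u v : 'I_N) (x : config N) :
  (3 <= N)%N -> u != v ->
  let a : R := (cnt_out u v x)%:R in
  let b : R := (cnt_in u v x)%:R in
  ((fun t => hitA R (MN u v) (@KN N) t x) @ \oo -->
     ((a + b) * (N%:R - 2) + 2^-1 * b * (b - 1)) / (N%:R - 1) ^+ 2)
  /\
  ((fun t => hitA R (@KN N) (MN u v) t x) @ \oo -->
     ((a + b) * (N%:R - 2) + 2^-1 * b * (3 - b)) / (N%:R - 1) ^+ 2).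
Proof.
move=> N_ge3 neq_uv a b.
split; first exact: (@hitA_cvg_fixprob R N u v N_ge3 neq_uv true x).
exact: (@hitA_cvg_fixprob R N u v N_ge3 neq_uv false x).
Qed.
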